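(* Let $\phi\colon[0,+\infty)\to(0,+\infty)$ satisfy $\int_{\mathbb{R}}\min\{1,|x|\}\,\phi(|x|)\,dx<+\infty$ and suppose there is an increasing function $\psi\colon[0,+\infty)\to[0,+\infty)$ such that $$\inf_{t>0}\frac{R^2\phi(Rt)-r^2\phi(rt)}{\phi(t)}\ge\psi(R)-\psi(r)\quad\text{for all }R\ge r\ge0.$$ If $A,B\subset\mathbb{R}$ are segments with $|A|\le|B|$, then, setting $c_\phi=P_\phi((0,1))$, $$P_\phi(A)+c_\phi\big(\psi(|B|)-\psi(|A|)\big)\le P_\phi(B).$$
   Context: For measurable $E\subset\mathbb{R}$, $P_\phi(E)=\frac12\int_{\mathbb{R}}\int_{\mathbb{R}}|\chi_E(x)-\chi_E(y)|\,\phi(|x-y|)\,dx\,dy=\int_E\int_{E^c}\phi(|x-y|)\,dx\,dy$. A segment is a bounded interval of positive length, and $|A|$ denotes its length. *)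

From HB Require Import structures.
From mathcomp Require Import all_boot all_order all_algebra.
From mathcomp Require Import all_classical all_reals all_analysis.
Set Implicit Arguments. Unset Strict Implicit. Unset Printing Implicit Defensive.
Import Order.TTheory GRing.Theory Num.Theory.
Local Open Scope classical_set_scope.
Local Open Scope ring_scope.
Local Open Scope ereal_scope.

Definition Pphi (R : realType) (phi : R -> R) (E : set R) : \bar R :=
  \int[@lebesgue_measure R]_(x in E)
     \int[@lebesgue_measure R]_(y in ~` E) (phi `|x - y|)%:E.

(* The segment with endpoints a < b; the booleans choose open/closed ends:
   BSide true a = closed at a on the left, BSide false a = open;
   BSide true b = open at b on the right, BSide false b = closed. *)
Definition seg (R : realType) (bl br : bool) (a b : R) : set R :=
  [set` Interval (BSide bl a) (BSide br b)].

From HB Require Import structures.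
From mathcomp Require Import all_boot all_order all_algebra.
From mathcomp Require Import all_classical all_reals all_analysis.
From mathcomp Require Import measurable_realfun ring lra.
Set Implicit Arguments.
Unset Strict Implicit.
Unset Printing Implicit Defensive.

Import Order.TTheory GRing.Theory Num.Theory.
Local Open Scope classical_set_scope.
Local Open Scope ring_scope.

(* The affine bijection u |-> a + L u from the unit segment onto a segment of
   length L multiplies Lebesgue measure by L, so the perimeter of a segment of
   length L is the perimeter of the unit segment for the kernel
   t |-> L^2 phi (L t); whether the endpoints belong to the segment does not
   matter, as they form a null set.  On a fixed set E the perimeter is
   additive, positively homogeneous and monotone in the kernel, since points
   of E and of its complement are at positive distance.  The hypothesis on psi
   is precisely the pointwise inequality of kernels
   |B|^2 phi (|B| t) >= |A|^2 phi (|A| t) + (psi |B| - psi |A|) phi t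
   for t > 0. *)

Section null_symdiff.
Context d (T : measurableType d) (R : realType) (mu : {measure set T -> \bar R}).

Lemma ge0_integral_null_symdiff (D1 D2 : set T) (f : T -> \bar R) :
  measurable D1 -> measurable D2 ->
  mu (D1 `\` D2) = 0%E -> mu (D2 `\` D1) = 0%E ->
  measurable_fun [set: T] f -> (forall x, 0 <= f x)%E ->
  (\int[mu]_(x in D1) f x = \int[mu]_(x in D2) f x)%E.
Proof.
move=> mD1 mD2 N12 N21 mf f0.
rewrite (ge0_negligible_integral _ _ _ _ N12) ?setDD; last 4 first.
- exact: measurableD.
- exact: mD1.
- exact: measurable_funTS.
- by move=> x _.
rewrite [RHS](ge0_negligible_integral _ _ _ _ N21) ?setDD 1?setIC //.
- exact: measurableD.
- exact: measurable_funTS.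
Qed.

End null_symdiff.

Section kernel.
Variable R : realType.
Local Notation mu := (@lebesgue_measure R).

Lemma measurable_nonneg : measurable [set t : R | 0 <= t].
Proof.
have -> : [set t : R | 0 <= t] = `[0, +oo[%classic.
  by apply/seteqP; split=> x /=; rewrite in_itv/= andbT.
exact: measurable_itv.
Qed.

Definition nonneg_kernel (K : R -> R) : Prop :=
  measurable_fun [set t : R | 0 <= t] K /\ forall t, 0 <= t -> 0 <= K t.

Lemma nonneg_kernelD (K1 K2 : R -> R) : nonneg_kernel K1 -> nonneg_kernel K2 ->
  nonneg_kernel (fun t => K1 t + K2 t).
Proof.
move=> [mK1 K10] [mK2 K20]; split; first exact: measurable_funD.
by move=> t t0; apply: addr_ge0; [exact: K10 | exact: K20].
Qed.

Lemma nonneg_kernelZ (c : R) (K : R -> R) : 0 <= c -> nonneg_kernel K ->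
  nonneg_kernel (fun t => c * K t).
Proof.
move=> c0 [mK K0]; split; first exact: measurable_funM.
by move=> t t0; apply: mulr_ge0 => //; exact: K0.
Qed.

Lemma nonneg_kernel_scale (L : R) (K : R -> R) : 0 <= L -> nonneg_kernel K ->
  nonneg_kernel (fun t => K (L * t)).
Proof.
move=> L0 [mK K0]; split=> [|t t0]; last by apply: K0; exact: mulr_ge0.
apply: (measurable_comp measurable_nonneg _ mK).
- by move=> _ [t t0 <-]; exact: mulr_ge0.
- exact: measurable_funM.
Qed.

Lemma measurable_fun_comp_nonneg d (T : measurableType d) (K : R -> R) (h : T -> R) :
  measurable_fun [set t : R | 0 <= t] K -> measurable_fun setT h ->
  (forall x, 0 <= h x) -> measurable_fun setT (K \o h).
Proof.
move=> mK mh h0; apply: (measurable_comp measurable_nonneg _ mK mh).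
by move=> _ [x _ <-]; exact: h0.
Qed.

Section fixed_kernel.
Variable K : R -> R.
Hypothesis hK : nonneg_kernel K.

Lemma kernel_dist_ge0 (x y : R) : (0 <= (K `|x - y|)%:E)%E.
Proof. by rewrite lee_fin; apply: hK.2. Qed.

Lemma measurable_kernel_dist (x : R) :
  measurable_fun setT (fun y : R => (K `|x - y|)%:E).
Proof.
apply/measurable_EFinP.
apply: (measurable_fun_comp_nonneg (h := fun y : R => `|x - y|) hK.1) => [|y].
- by apply: measurableT_comp; [exact: normr_measurable | exact: measurable_funB].
- exact: normr_ge0.
Qed.

Lemma kernel_integral_ge0 (D : set R) (x : R) :
  (0 <= \int[mu]_(y in D) (K `|x - y|)%:E)%E.
Proof. by apply: integral_ge0 => y _; exact: kernel_dist_ge0. Qed.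

Lemma measurable_kernel_integral (D : set R) : measurable D ->
  measurable_fun setT (fun x : R => \int[mu]_(y in D) (K `|x - y|)%:E)%E.
Proof.
move=> mD; pose f (p : R * R) := ((K `|p.1 - p.2|) * \1_D p.2)%:E.
have -> : (fun x => \int[mu]_(y in D) (K `|x - y|)%:E)%E = fubini_F mu f.
  apply/funext => x; rewrite /fubini_F [LHS]integral_mkcond.
  apply: eq_integral => y _; rewrite /patch /f indicE.
  by case: ifP; rewrite ?mulr1 ?mulr0.
apply: measurable_fun_fubini_tonelli_F => [|p]; last first.
  by rewrite /f lee_fin; apply: mulr_ge0 => //; exact: hK.2.
apply/measurable_EFinP; apply: measurable_funM.
  apply: (measurable_fun_comp_nonneg (h := fun p : R * R => `|p.1 - p.2|) hK.1) => [|p].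
    by apply: measurableT_comp; [exact: normr_measurable | exact: measurable_funB].
  exact: normr_ge0.
exact: (measurableT_comp (measurable_indic mD) measurable_snd).
Qed.

End fixed_kernel.

Section affine_change.
Variables (L a : R).
Hypothesis L0 : 0 < L.
Let g (u : R) := L * u + a.

Let measurable_g : measurable_fun setT g.
Proof. by apply: measurable_funD => //; exact: measurable_funM. Qed.

Let g_preimage_itvoc (x y : R) :
  g @^-1` `]x, y]%classic = `](x - a) / L, (y - a) / L]%classic.
Proof.
apply/seteqP; split => u /=; rewrite !in_itv /= /g ltr_pdivrMr // ler_pdivlMr //.
  by move=> /andP[h1 h2]; apply/andP; split; lra.
by move=> /andP[h1 h2]; apply/andP; split; lra.
Qed.

Let nu := @measure_function_pushforward__canonical__measure_function_Measure
  _ _ (measurableTypeR R) (measurableTypeR R) R mu g measurable_g.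
Let k : {nonneg R} := NngNum (ltW L0).

Lemma lebesgue_measure_affine (A : set R) : measurable A ->
  mu A = (L%:E * mu (g @^-1` A))%E.
Proof.
apply: (@lebesgue_measure_unique _ (mscale k nu)) => _ [[x y] _ <-] /=.
rewrite /mscale /= /pushforward g_preimage_itvoc !lebesgue_measure_itv /= !lte_fin.
rewrite ltr_pM2r ?invr_gt0 // ltrD2r.
case: ifP => _; last by rewrite mule0.
by rewrite -!EFinD -EFinM; congr (_%:E); field; exact: lt0r_neq0.
Qed.

Lemma ge0_integral_affine (D : set R) (f : R -> \bar R) :
  measurable D -> measurable_fun setT f -> (forall x, 0 <= f x)%E ->
  (\int[mu]_(x in D) f x = L%:E * \int[mu]_(u in g @^-1` D) f (g u))%E.
Proof.
move=> mD mf f0.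
rewrite (eq_measure_integral (mscale k nu)); last first.
  by move=> A mA _; exact: lebesgue_measure_affine.
rewrite ge0_integral_mscale //; last exact: measurable_funTS.
by rewrite ge0_integral_pushforward //; exact: measurable_funTS.
Qed.

End affine_change.

Lemma seg_subset_itvcc bl br (a b : R) : seg bl br a b `<=` `[a, b].
Proof.
by move=> x; rewrite /seg /= !in_itv /=; case: bl; case: br => /= /andP[h1 h2];
  apply/andP; split => //; exact: ltW.
Qed.

Lemma itvoo_subset_seg bl br (a b : R) : `]a, b[ `<=` seg bl br a b.
Proof.
by move=> x; rewrite /seg /= !in_itv /=; case: bl; case: br => /= /andP[h1 h2];
  apply/andP; split => //; exact: ltW.
Qed.

Lemma seg_setD_ends bl br bl' br' (a b : R) :
  seg bl br a b `\` seg bl' br' a b `<=` [set a] `|` [set b].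
Proof.
move=> x [/seg_subset_itvcc + notx]; rewrite /= in_itv /= => /andP[ax xb].
have : ~ (a < x < b) by move=> axb; apply/notx/itvoo_subset_seg; rewrite /= in_itv.
case: (eqVneq x a) => [->|xa]; first by left.
case: (eqVneq x b) => [->|xb']; first by right.
by rewrite !lt_neqAle eq_sym xa xb' ax xb.
Qed.

Lemma lebesgue_measure_seg_setD bl br bl' br' (a b : R) :
  mu (seg bl br a b `\` seg bl' br' a b) = 0%E.
Proof.
apply: (subset_measure0 (T := measurableTypeR R) (B := [set a] `|` [set b])).
- by apply: measurableD; exact: measurable_itv.
- exact: measurableU.
- exact: seg_setD_ends.
- change (mu ([set a] `|` [set b]) = 0%E).
  by rewrite measureU0 //; exact: lebesgue_measure_set1.
Qed.

Lemma seg_affine_preimage bl br (a1 a2 : R) : a1 < a2 ->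
  (fun u : R => (a2 - a1) * u + a1) @^-1` seg bl br a1 a2 = seg bl br 0 1.
Proof.
move=> a12; have L0 : 0 < a2 - a1 by rewrite subr_gt0.
have e1 u : (a1 <= (a2 - a1) * u + a1) = (0 <= u).
  by rewrite lerDr pmulr_rge0.
have e2 u : (a1 < (a2 - a1) * u + a1) = (0 < u).
  by rewrite ltrDr pmulr_rgt0.
have e3 u : ((a2 - a1) * u + a1 <= a2) = (u <= 1).
  by rewrite -lerBrDr -[leRHS]mulr1 ler_pM2l.
have e4 u : ((a2 - a1) * u + a1 < a2) = (u < 1).
  by rewrite -ltrBrDr -[ltRHS]mulr1 ltr_pM2l.
apply/seteqP; split=> u; rewrite /seg /= !in_itv /=;
  by case: bl; case: br; rewrite /= ?e1 ?e2 ?e3 ?e4.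
Qed.

Section Pphi_kernel.
Variable E : set R.
Hypothesis mE : measurable E.
Let mEc : measurable (~` E) := measurableC mE.

Lemma PphiD (K1 K2 : R -> R) : nonneg_kernel K1 -> nonneg_kernel K2 ->
  Pphi (fun t => K1 t + K2 t) E = (Pphi K1 E + Pphi K2 E)%E.
Proof.
move=> hK1 hK2; rewrite /Pphi -ge0_integralD //; first last.
- by apply: measurable_funTS; exact: measurable_kernel_integral.
- by move=> x _; exact: kernel_integral_ge0.
- by apply: measurable_funTS; exact: measurable_kernel_integral.
- by move=> x _; exact: kernel_integral_ge0.
apply: eq_integral => x _; rewrite -ge0_integralD //.
- by move=> y _; exact: kernel_dist_ge0.
- by apply: measurable_funTS; exact: measurable_kernel_dist.
- by move=> y _; exact: kernel_dist_ge0.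
- by apply: measurable_funTS; exact: measurable_kernel_dist.
Qed.

Lemma PphiZ (c : R) (K : R -> R) : 0 <= c -> nonneg_kernel K ->
  Pphi (fun t => c * K t) E = (c%:E * Pphi K E)%E.
Proof.
move=> c0 hK; rewrite /Pphi -ge0_integralZl //.
- apply: eq_integral => x _; rewrite -ge0_integralZl //.
  + by apply: measurable_funTS; exact: measurable_kernel_dist.
  + by move=> y _; exact: kernel_dist_ge0.
- by apply: measurable_funTS; exact: measurable_kernel_integral.
- by move=> x _; exact: kernel_integral_ge0.
Qed.

Lemma le_Pphi (K1 K2 : R -> R) : nonneg_kernel K1 -> nonneg_kernel K2 ->
  (forall t, 0 < t -> K1 t <= K2 t) -> (Pphi K1 E <= Pphi K2 E)%E.
Proof.
move=> hK1 hK2 K12; apply: ge0_le_integral => //.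
- by move=> x _; exact: kernel_integral_ge0.
- by apply: measurable_funTS; exact: measurable_kernel_integral.
- by apply: measurable_funTS; exact: measurable_kernel_integral.
move=> x Ex; apply: ge0_le_integral => //.
- by move=> y _; exact: kernel_dist_ge0.
- by apply: measurable_funTS; exact: measurable_kernel_dist.
- by apply: measurable_funTS; exact: measurable_kernel_dist.
move=> y Ecy; rewrite lee_fin; apply: K12.
by rewrite normr_gt0 subr_eq0; apply/eqP => xy; apply: Ecy; rewrite -xy.
Qed.

End Pphi_kernel.

Section Pphi_seg.
Variable K : R -> R.
Hypothesis hK : nonneg_kernel K.

Lemma Pphi_seg_ends bl br bl' br' (a b : R) :
  Pphi K (seg bl br a b) = Pphi K (seg bl' br' a b).
Proof.
have mS bl0 br0 : measurable (seg bl0 br0 a b) by exact: measurable_itv.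
rewrite /Pphi; transitivity (\int[mu]_(x in seg bl br a b)
    \int[mu]_(y in ~` seg bl' br' a b) (K `|x - y|)%:E)%E.
  apply: eq_integral => x _; apply: ge0_integral_null_symdiff.
  - by apply: measurableC; exact: mS.
  - by apply: measurableC; exact: mS.
  - by rewrite setDE setCK setIC -setDE; exact: lebesgue_measure_seg_setD.
  - by rewrite setDE setCK setIC -setDE; exact: lebesgue_measure_seg_setD.
  - exact: measurable_kernel_dist.
  - by move=> y; exact: kernel_dist_ge0.
apply: ge0_integral_null_symdiff.
- exact: mS.
- exact: mS.
- exact: lebesgue_measure_seg_setD.
- exact: lebesgue_measure_seg_setD.
- exact: (measurable_kernel_integral hK (measurableC (mS bl' br'))).
- by move=> x; exact: kernel_integral_ge0.
Qed.

Lemma Pphi_seg_dilate bl br (a1 a2 : R) : a1 < a2 ->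
  Pphi K (seg bl br a1 a2) =
  Pphi (fun t => (a2 - a1) ^+ 2 * K ((a2 - a1) * t)) (seg bl br 0 1).
Proof.
move=> a12; have L0 : 0 < a2 - a1 by rewrite subr_gt0.
set L := a2 - a1 in L0 *; set A := seg bl br a1 a2; set S := seg bl br 0 1.
have mA : measurable A by exact: measurable_itv.
have mS : measurable S by exact: measurable_itv.
have preA : (fun u => L * u + a1) @^-1` A = S by exact: seg_affine_preimage.
have inner u : (\int[mu]_(y in ~` A) (K `|L * u + a1 - y|)%:E =
    L%:E * \int[mu]_(v in ~` S) (K (L * `|u - v|))%:E)%E.
  rewrite (ge0_integral_affine a1 L0 (measurableC mA)); last 2 first.
  - exact: measurable_kernel_dist.
  - by move=> y; exact: kernel_dist_ge0.
  rewrite -preimage_setC preA; congr (_ * _)%E; apply: eq_integral => v _.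
  have -> : L * u + a1 - (L * v + a1) = L * (u - v) by ring.
  by rewrite normrM gtr0_norm.
have hKL := nonneg_kernel_scale (ltW L0) hK.
rewrite (PphiZ mS (sqr_ge0 L) hKL) /Pphi (ge0_integral_affine a1 L0 mA).
- rewrite preA; under eq_integral => u _ do rewrite inner.
  rewrite ge0_integralZl ?muleA -?EFinM -?expr2 //.
  + apply: measurable_funTS.
    exact: (measurable_kernel_integral hKL (measurableC mS)).
  + by move=> x _; exact: (kernel_integral_ge0 hKL).
  + by rewrite lee_fin ltW.
- exact: (measurable_kernel_integral hK (measurableC mA)).
- by move=> x; exact: kernel_integral_ge0.
Qed.

End Pphi_seg.
End kernel.

Theorem mainTheorem8 (R : realType) (phi psi : R -> R)
  (phi_pos : forall t, 0 <= t -> 0 < phi t)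
  (phi_meas : measurable_fun [set t : R | 0 <= t] phi)
  (phi_int : (\int[@lebesgue_measure R]_(x in [set: R])
                 (Num.min 1 `|x| * phi `|x|)%:E < +oo)%E)
  (psi_nneg : forall t, 0 <= t -> 0 <= psi t)
  (psi_incr : forall s t, 0 <= s -> s <= t -> psi s <= psi t)
  (psi_cond : forall Rr r, 0 <= r -> r <= Rr -> forall t, 0 < t ->
       (Rr ^+ 2 * phi (Rr * t) - r ^+ 2 * phi (r * t)) / phi t >= psi Rr - psi r)
  (blA brA blB brB : bool) (a1 a2 b1 b2 : R)
  (hA : a1 < a2) (hB : b1 < b2) (hAB : a2 - a1 <= b2 - b1) :
  (Pphi phi (seg blA brA a1 a2)
   + Pphi phi (seg false true 0 1) * (psi (b2 - b1) - psi (a2 - a1))%:E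
   <= Pphi phi (seg blB brB b1 b2))%E.
Proof.
have hphi : nonneg_kernel phi by split=> // t /phi_pos /ltW.
rewrite (Pphi_seg_ends hphi blA brA false true) (Pphi_seg_dilate hphi _ _ hA).
rewrite (Pphi_seg_ends hphi blB brB false true) (Pphi_seg_dilate hphi _ _ hB).
set LA := a2 - a1 in hAB *; set LB := b2 - b1 in hAB *.
have LA0 : 0 < LA by rewrite subr_gt0.
have LB0 : 0 < LB by rewrite subr_gt0.
have dpsi0 : 0 <= psi LB - psi LA.
  by rewrite subr_ge0; apply: psi_incr => //; exact: ltW.
have mS : measurable (seg false true 0 1 : set R) by exact: measurable_itv.
have hK L : 0 < L -> nonneg_kernel (fun t => L ^+ 2 * phi (L * t)).
  by move=> L0; apply: nonneg_kernelZ (sqr_ge0 L) (nonneg_kernel_scale (ltW L0) hphi).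
have hKd := nonneg_kernelZ dpsi0 hphi.
rewrite muleC -(PphiZ mS dpsi0 hphi) -(PphiD mS (hK _ LA0) hKd).
apply: (le_Pphi mS (nonneg_kernelD (hK _ LA0) hKd) (hK _ LB0)) => t t0.
have := psi_cond LB LA (ltW LA0) hAB t t0.
by rewrite ler_pdivlMr; [lra | exact/phi_pos/ltW].
Qed.
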